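(* For the path $P_n$ on $n\ge 2$ vertices, $b_{OCD}(P_n)=1$ if $n=2$, $b_{OCD}(P_n)=2$ if $n=3$, and $b_{OCD}(P_n)=\lceil n/3\rceil-1$ if $n\ge 4$.
   Context: A set $S\subseteq V$ is a dominating set of a graph $G=(V,E)$ if every vertex not in $S$ is adjacent to a vertex of $S$. A set $\tilde D\subseteq V$ is an outer-connected dominating set of $G$ if $\tilde D$ is dominating and the induced subgraph $G[V\setminus\tilde D]$ is connected (the empty graph counts as connected). $\tilde\gamma_c(G)$ is the minimum size of an outer-connected dominating set. For a graph $G$ without isolated vertices, the outer-connected bondage number $b_{OCD}(G)$ is the minimum number of edges whose removal from $G$ yields a graph $G'$ with $\tilde\gamma_c(G')>\tilde\gamma_c(G)$. *)

(* Simple graphs on a finite vertex type T, given by an edge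
   set E : {set {set T}} whose members are 2-element vertex sets. *)
From mathcomp Require Import all_boot.
Set Implicit Arguments. Unset Strict Implicit. Unset Printing Implicit Defensive.

Section Graphs.
Variable T : finType.

Definition adj (E : {set {set T}}) : rel T :=
  fun x y => (x != y) && ([set x; y] \in E).

Definition dominating (E : {set {set T}}) (S : {set T}) : bool :=
  [forall v, (v \notin S) ==> [exists u, (u \in S) && adj E u v]].

(* the induced subgraph G[A] is connected (the empty graph counts as connected) *)
Definition induced_connected (E : {set {set T}}) (A : {set T}) : bool :=
  [forall x in A, forall y in A,
     connect (fun u v => [&& u \in A, v \in A & adj E u v]) x y].

Definition ocd (E : {set {set T}}) (D : {set T}) : bool :=
  dominating E D && induced_connected E (~: D).

(* outer-connected domination number: minimum size of an OCD set
   (the full vertex set is always an OCD set, so the default #|T| is harmless) *)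
Definition gamma_oc (E : {set {set T}}) : nat :=
  \big[minn/#|T|]_(D : {set T} | ocd E D) #|D|.

(* outer-connected bondage number: minimum number of edges of G whose removal
   strictly increases gamma_oc (default #|E| + 1 if no such set exists;
   never reached for graphs without isolated vertices on >= 2 vertices) *)
Definition bOCD (E : {set {set T}}) : nat :=
  \big[minn/#|E|.+1]_(F : {set {set T}} | (F \subset E) &&
                                           (gamma_oc E < gamma_oc (E :\: F)))
     #|F|.
End Graphs.

Definition path_edges (n : nat) : {set {set 'I_n}} :=
  [set [set i; j] | i in [set: 'I_n], j in [set: 'I_n] & (val i).+1 == val j].

From mathcomp Require Import all_boot zify.
Set Implicit Arguments. Unset Strict Implicit. Unset Printing Implicit Defensive.

(* Let H be a spanning subgraph of the path P_n and D an outer-connected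
   dominating set of H. The complement of D induces a connected subgraph of H,
   so it is a block of consecutive vertices joined by edges of H; since each of
   its vertices needs a neighbour in D, it has no interior vertex, so it has at
   most two vertices. Two are possible exactly when H has three consecutive
   edges, one exactly when H has an edge. Hence the outer-connected domination
   number of H is n - 2, n - 1 or n accordingly.
   For n >= 4, deleting a set F of edges of P_n raises it exactly when F meets
   each of the n - 3 runs of three consecutive edges: the floor((n-1)/3)
   disjoint runs force that many edges, and every third edge suffices. For
   n = 2, 3 there is no such run and all n - 1 edges must be deleted. *)

Lemma geq_bigmin_cond (I : finType) (P : pred I) (F : I -> nat) d i0 :
  P i0 -> \big[minn/d]_(i | P i) F i <= F i0.
Proof.
rewrite unlock; have : i0 \in index_enum I by rewrite mem_index_enum.
elim: (index_enum I) => [//|a r IH]; rewrite inE /= => /orP [/eqP <- ->|r_i0 P_i0].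
  exact: geq_minl.
case: (P a); last exact: IH.
exact: leq_trans (geq_minr _ _) (IH r_i0 P_i0).
Qed.

Lemma leq_bigmin (I : finType) (P : pred I) (F : I -> nat) d m :
  m <= d -> (forall i, P i -> m <= F i) -> m <= \big[minn/d]_(i | P i) F i.
Proof.
move=> m_le_d m_le_F; apply: (big_ind (fun x => m <= x)) => // x y mx my.
by rewrite leq_min mx my.
Qed.

Lemma connect_exit (T : finType) (r : rel T) (P : pred T) x y :
  connect r x y -> P x -> ~~ P y -> exists u v, [/\ r u v, P u & ~~ P v].
Proof.
move/connectP=> [p]; elim: p x => [|z p IH] x /=; first by move=> _ -> ->.
move=> /andP [r_xz path_zp] last_y Px Py; case Pz: (P z); first exact: IH path_zp last_y Pz Py.
by exists x, z; rewrite r_xz Px Pz.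
Qed.

Section OuterConnectedDomination.
Variable T : finType.
Implicit Types (E : {set {set T}}) (D : {set T}).

Lemma gamma_oc_le E D : ocd E D -> gamma_oc E <= #|D|.
Proof. exact: geq_bigmin_cond. Qed.

Lemma leq_gamma_oc E k :
  k <= #|T| -> (forall D, ocd E D -> k <= #|D|) -> k <= gamma_oc E.
Proof. exact: leq_bigmin. Qed.

Lemma gamma_oc0 : gamma_oc (set0 : {set {set T}}) = #|T|.
Proof.
apply/eqP; rewrite eqn_leq; apply/andP; split.
  rewrite -cardsT; apply: gamma_oc_le; apply/andP; split; apply/forallP => v.
    by rewrite inE.
  by rewrite setCT inE.
apply: leq_gamma_oc => // D /andP [/forallP dom _].
suff -> : D = setT by rewrite cardsT.
apply/setP => v; rewrite inE; apply: contraT => /(implyP (dom v)).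
by case/existsP => u /and3P [_ _]; rewrite inE.
Qed.

Lemma adjC E u v : adj E u v = adj E v u.
Proof. by rewrite /adj eq_sym setUC. Qed.

Lemma bOCD_eq E (k : nat) :
  (forall F : {set {set T}}, F \subset E -> gamma_oc E < gamma_oc (E :\: F) -> k <= #|F|) ->
  k <= #|E|.+1 ->
  (exists F : {set {set T}}, [/\ F \subset E, gamma_oc E < gamma_oc (E :\: F) & #|F| <= k]) ->
  bOCD E = k.
Proof.
move=> lbF k_le [F [sFE ltF cardF]]; apply/eqP; rewrite eqn_leq; apply/andP; split.
  by apply: leq_trans (geq_bigmin_cond _ _ _) cardF; rewrite sFE ltF.
by apply: leq_bigmin => // F' /andP []; apply: lbF.
Qed.

End OuterConnectedDomination.

Section PathSubgraph.
Variable n : nat.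
Implicit Types (E : {set {set 'I_n}}) (D : {set 'I_n}).

Lemma path_edgesP (e : {set 'I_n}) :
  reflect (exists i j : 'I_n, i.+1 = j :> nat /\ e = [set i; j])
          (e \in path_edges n).
Proof.
apply: (iffP imset2P) => [[i j _]|[i [j [ij ->]]]].
  by rewrite inE => /andP [_ /eqP ij] ->; exists i, j.
by exists i j => //; rewrite !inE ij eqxx.
Qed.

Lemma adj_subpath E u v : E \subset path_edges n -> adj E u v ->
  u.+1 = v :> nat \/ v.+1 = u :> nat.
Proof.
move=> sEP /andP [neq_uv uvE].
have /path_edgesP [i [j [ij e_uv]]] := subsetP sEP _ uvE.
have /set2P u_ij : u \in [set i; j] by rewrite -e_uv set21.
have /set2P v_ij : v \in [set i; j] by rewrite -e_uv set22.
by move: neq_uv; case: u_ij => ->; case: v_ij => ->; rewrite ?eqxx //; auto.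
Qed.

Lemma adj_succ E (u v : 'I_n) : u.+1 = v :> nat -> [set u; v] \in E -> adj E u v.
Proof. by move=> uv uvE; rewrite /adj uvE andbT -val_eqE /=; lia. Qed.

Definition has_run3 E := exists a b c d : 'I_n,
  [/\ a.+1 = b :> nat, b.+1 = c :> nat, c.+1 = d :> nat &
      [/\ [set a; b] \in E, [set b; c] \in E & [set c; d] \in E]].

Lemma has_run3_ge4 E : has_run3 E -> 4 <= n.
Proof. by move=> [a [b [c [d [ab bc cd _]]]]]; have := ltn_ord d; lia. Qed.

Section OcdComplement.
Variables (E : {set {set 'I_n}}) (D : {set 'I_n}).
Hypotheses (sEP : E \subset path_edges n) (ocdD : ocd E D).

Let compl_connect x y : x \in ~: D -> y \in ~: D ->
  connect (fun u v => [&& u \in ~: D, v \in ~: D & adj E u v]) x y.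
Proof. by case/andP: ocdD => _ /forall_inP/(_ x) + x_D y_D => /(_ x_D)/forall_inP; apply. Qed.

Let neq_ocd_compl u w : u \in D -> w \in ~: D -> u <> w :> nat.
Proof. by move=> u_D w_D /ord_inj uw; move: u_D w_D; rewrite uw inE => ->. Qed.

Lemma ocd_compl_dominated w : w \in ~: D -> exists2 u, u \in D & adj E u w.
Proof.
rewrite inE => w_D; case/andP: ocdD => /forallP/(_ w)/implyP/(_ w_D).
by case/existsP => u /andP []; exists u.
Qed.

Lemma ocd_compl_crossing x y (z : nat) : x \in ~: D -> y \in ~: D -> x <= z < y ->
  exists u v, [/\ u \in ~: D, v \in ~: D, adj E u v, u = z :> nat & v = z.+1 :> nat].
Proof.
move=> x_D y_D /andP [xz zy]; have zy' : ~~ (y <= z) by rewrite -ltnNge.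
have [u [v [/and3P [u_D v_D uv] uz vz]]] :=
  connect_exit (P := fun w : 'I_n => w <= z) (compl_connect x_D y_D) xz zy'.
by exists u, v; split => //; rewrite -ltnNge in vz; case: (adj_subpath sEP uv); lia.
Qed.

(* The vertex between x and y could only be dominated by x or y. *)
Lemma ocd_compl_gap x y : x \in ~: D -> y \in ~: D -> y <= x.+1.
Proof.
move=> x_D y_D; rewrite leqNgt; apply/negP => xy.
have [u1 [v1 [u1_D v1_D _ u1x v1x]]] := ocd_compl_crossing (z := x) x_D y_D ltac:(lia).
have [u2 [v2 [_ v2_D _ _ v2x]]] := ocd_compl_crossing (z := x.+1) x_D y_D ltac:(lia).
have [u u_D uv1] := ocd_compl_dominated v1_D.
case: (adj_subpath sEP uv1) => [uv|vu].
- by apply: (neq_ocd_compl u_D u1_D); apply: succn_inj; rewrite uv v1x u1x.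
- by apply: (neq_ocd_compl u_D v2_D); rewrite -vu v1x v2x.
Qed.

Lemma card_ocd_compl_le2 : #|~: D| <= 2.
Proof.
case: (ltnP 1 #|~: D|) => [/card_gt1P [x [y [x_D y_D neq_xy]]]|]; last by move/leq_trans; apply.
suff /subset_leq_card : ~: D \subset [set x; y] by rewrite cards2 neq_xy.
apply/subsetP => z z_D; move: neq_xy; rewrite !inE -!val_eqE /=.
have := ocd_compl_gap x_D z_D; have := ocd_compl_gap z_D x_D.
have := ocd_compl_gap y_D z_D; have := ocd_compl_gap z_D y_D.
have := ocd_compl_gap x_D y_D; have := ocd_compl_gap y_D x_D.
lia.
Qed.

Lemma ocd_compl_consecutive : 1 < #|~: D| ->
  exists x y, [/\ x \in ~: D, y \in ~: D & x.+1 = y :> nat].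
Proof.
case/card_gt1P => x [y [x_D y_D]]; rewrite -val_eqE => neq_xy.
have := ocd_compl_gap x_D y_D; have := ocd_compl_gap y_D x_D.
by case: (ltngtP x y) neq_xy => // ? _ ? ?; [exists x, y | exists y, x]; split=> //; lia.
Qed.

Lemma ocd_compl_run : 1 < #|~: D| -> has_run3 E.
Proof.
case/ocd_compl_consecutive => x [y [x_D y_D xy]].
have [u u_D ux] := ocd_compl_dominated x_D.
have [v v_D vy] := ocd_compl_dominated y_D.
have xxy : x <= x < y by rewrite -xy leqnn ltnSn.
have [x' [y' [_ _ /andP [_ xyE] x'x y'y]]] := ocd_compl_crossing x_D y_D xxy.
have ? : x' = x by apply: ord_inj.
have ? : y' = y by apply: ord_inj; rewrite y'y.
subst x' y'.
have ux1 : u.+1 = x :> nat.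
  case: (adj_subpath sEP ux) => // xu.
  by case: (neq_ocd_compl u_D y_D); rewrite -xu.
have y1v : y.+1 = v :> nat.
  case: (adj_subpath sEP vy) => // vy1.
  by case: (neq_ocd_compl v_D x_D); apply: succn_inj; rewrite vy1.
rewrite adjC in vy; exists u, x, y, v; split=> //.
by split=> //; [case/andP: ux | case/andP: vy].
Qed.

End OcdComplement.

Lemma gamma_oc_subpath_ge E : E \subset path_edges n -> n - 2 <= gamma_oc E.
Proof.
move=> sEP; apply: leq_gamma_oc => [|D ocdD]; first by rewrite card_ord leq_subr.
by rewrite cardsCs card_ord; have := card_ocd_compl_le2 sEP ocdD; lia.
Qed.

Lemma gamma_oc_subpath_ge_norun E : E \subset path_edges n -> ~ has_run3 E ->
  n.-1 <= gamma_oc E.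
Proof.
move=> sEP norun; apply: leq_gamma_oc => [|D ocdD]; first by rewrite card_ord leq_pred.
rewrite cardsCs card_ord; suff : #|~: D| <= 1 by lia.
by rewrite leqNgt; apply/negP => /(ocd_compl_run sEP ocdD).
Qed.

Lemma gamma_oc_le_run E : has_run3 E -> gamma_oc E <= n - 2.
Proof.
move=> [a [b [c [d [ab bc cd [abE bcE cdE]]]]]].
have neq_bc : b != c by rewrite -val_eqE /=; lia.
apply: leq_trans (gamma_oc_le (D := ~: [set b; c]) _) _; last first.
  by rewrite cardsCs setCK cards2 neq_bc card_ord.
apply/andP; split.
  apply/forallP => v; rewrite in_setC negbK; apply/implyP => /set2P [] ->; apply/existsP.
    by exists a; rewrite adj_succ // !inE -!val_eqE /=; lia.
  by exists d; rewrite adjC adj_succ // !inE -!val_eqE /=; lia.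
apply/forall_inP => x; rewrite setCK => bc_x; apply/forall_inP => y bc_y.
case/set2P: bc_x => ->; case/set2P: bc_y => ->; rewrite ?connect0 //; apply: connect1;
  rewrite !inE !eqxx ?orbT /=.
- exact: adj_succ.
- by rewrite adjC adj_succ.
Qed.

Lemma gamma_oc_le_edge E : E \subset path_edges n -> E != set0 -> gamma_oc E <= n.-1.
Proof.
move=> sEP /set0Pn [e eE]; have /path_edgesP [i [j [ij e_ij]]] := subsetP sEP _ eE.
apply: leq_trans (gamma_oc_le (D := ~: [set j]) _) _; last first.
  by rewrite cardsCs setCK cards1 card_ord subn1.
apply/andP; split.
  apply/forallP => v; rewrite in_setC negbK; apply/implyP => /set1P ->.
  by apply/existsP; exists i; rewrite adj_succ -?e_ij // !inE -val_eqE /=; lia.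
apply/forall_inP => x; rewrite setCK => /set1P ->.
by apply/forall_inP => y /set1P ->; rewrite connect0.
Qed.

Lemma gamma_oc_lt_norun E E' :
  E \subset path_edges n -> E' \subset path_edges n -> has_run3 E ->
  gamma_oc E < gamma_oc E' <-> ~ has_run3 E'.
Proof.
move=> sEP sE'P runE; have n_ge4 := has_run3_ge4 runE.
have := gamma_oc_le_run runE; have := gamma_oc_subpath_ge sEP.
split=> [lt_gamma runE'|norun]; first by have := gamma_oc_le_run runE'; lia.
by have := gamma_oc_subpath_ge_norun sE'P norun; lia.
Qed.

End PathSubgraph.

Section PathOnSuccVertices.
Variable m : nat.
Local Notation n := m.+1.
Local Notation E := (path_edges n).

Definition path_edge (i : nat) : {set 'I_n} := [set inord i; inord i.+1].

Lemma path_edge_ord (a b : 'I_n) : a.+1 = b :> nat -> path_edge a = [set a; b].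
Proof. by move=> ab; rewrite /path_edge ab !inord_val. Qed.

Lemma path_edge_inj i j : i < m -> j < m -> path_edge i = path_edge j -> i = j.
Proof.
move=> lt_im lt_jm eq_ij; have : inord i \in path_edge j by rewrite -eq_ij set21.
have : inord j \in path_edge i by rewrite eq_ij set21.
by rewrite !inE -!val_eqE /= !inordK //; lia.
Qed.

Lemma path_edgesE : E = [set path_edge i | i : 'I_m].
Proof.
apply/setP => e; apply/path_edgesP/imsetP => [[i [j [ij ->]]]|[i _ ->]].
  have lt_im : i < m by have := ltn_ord j; lia.
  by exists (Ordinal lt_im); rewrite // (path_edge_ord ij).
exists (inord i), (inord i.+1); split=> //.
by rewrite !inordK //; have := ltn_ord i; lia.
Qed.

Lemma path_edge_in i : i < m -> path_edge i \in E.
Proof. by move=> lt_im; rewrite path_edgesE; apply/imsetP; exists (Ordinal lt_im). Qed.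

Lemma card_path_edges : #|E| = m.
Proof.
rewrite path_edgesE card_in_imset ?card_ord // => i j _ _.
by move/(path_edge_inj (ltn_ord i) (ltn_ord j))/ord_inj.
Qed.

Lemma has_run3P (F : {set {set 'I_n}}) : has_run3 F <->
  exists i, [/\ i.+3 <= m, path_edge i \in F, path_edge i.+1 \in F & path_edge i.+2 \in F].
Proof.
split=> [[a [b [c [d [ab bc cd [abF bcF cdF]]]]]]|[i [lt_im iF i1F i2F]]].
  exists a; rewrite (path_edge_ord ab) ab (path_edge_ord bc) bc (path_edge_ord cd).
  by split=> //; have := ltn_ord d; lia.
exists (inord i), (inord i.+1), (inord i.+2), (inord i.+3).
by rewrite !inordK //; lia.
Qed.

Lemma run_transversal_card F : ~ has_run3 (E :\: F) -> m %/ 3 <= #|F|.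
Proof.
move=> norun.
pose hit j := if path_edge (3 * j) \in F then 3 * j
              else if path_edge (3 * j).+1 \in F then (3 * j).+1 else (3 * j).+2.
have hit_block j : 3 * j <= hit j <= (3 * j).+2.
  by rewrite /hit; do 2?case: ifP => _; apply/andP; split; lia.
have hitF j : j < m %/ 3 -> path_edge (hit j) \in F.
  move=> lt_j; rewrite /hit; case: ifP => // F0; case: ifP => // F1.
  apply: contraT => /negbTE F2; case: norun; apply/has_run3P; exists (3 * j).
  by split; rewrite ?in_setD ?F0 ?F1 ?F2 ?path_edge_in //; lia.
have sub : [set path_edge (hit j) | j : 'I_(m %/ 3)] \subset F.
  by apply/subsetP => _ /imsetP [j _ ->]; apply: hitF.
apply: leq_trans (subset_leq_card sub); rewrite card_in_imset ?card_ord //.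
have hit_lt (j : 'I_(m %/ 3)) : hit j < m by have := hit_block j; have := ltn_ord j; lia.
move=> j1 j2 _ _ /(path_edge_inj (hit_lt j1) (hit_lt j2)) eq_hit; apply: ord_inj.
by have := hit_block j1; have := hit_block j2; rewrite eq_hit; lia.
Qed.

Definition every_third_edge : {set {set 'I_n}} :=
  [set path_edge (3 * j).+2 | j : 'I_(m %/ 3)].

Lemma every_third_edge_sub : every_third_edge \subset E.
Proof.
by apply/subsetP => _ /imsetP [j _ ->]; apply: path_edge_in; have := ltn_ord j; lia.
Qed.

Lemma card_every_third_edge : #|every_third_edge| <= m %/ 3.
Proof. by apply: leq_trans (leq_imset_card _ _) _; rewrite card_ord. Qed.

(* Any three consecutive edge indices contain one congruent to 2 mod 3. *)
Lemma every_third_edge_norun : ~ has_run3 (E :\: every_third_edge).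
Proof.
case/has_run3P => i [lt_im iF i1F i2F].
have lt_q : i %/ 3 < m %/ 3 by lia.
have qF : path_edge (3 * (i %/ 3)).+2 \in every_third_edge.
  by apply/imsetP; exists (Ordinal lt_q).
have [e|[e|e]] : (3 * (i %/ 3)).+2 = i \/ (3 * (i %/ 3)).+2 = i.+1 \/
                  (3 * (i %/ 3)).+2 = i.+2 by lia.
- by move: iF; rewrite -e in_setD qF.
- by move: i1F; rewrite -e in_setD qF.
- by move: i2F; rewrite -e in_setD qF.
Qed.

Lemma bOCD_long_path : 3 <= m -> bOCD E = m %/ 3.
Proof.
move=> m_ge3; have sDP F : E :\: F \subset E := subsetDl E F.
have runE : has_run3 E.
  by apply/has_run3P; exists 0; rewrite !path_edge_in //; lia.
have lt_gamma F : gamma_oc E < gamma_oc (E :\: F) <-> ~ has_run3 (E :\: F).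
  exact: gamma_oc_lt_norun (subxx E) (sDP F) runE.
apply: bOCD_eq => [F _ /lt_gamma /run_transversal_card //||].
- by rewrite card_path_edges; lia.
- exists every_third_edge; split; rewrite ?lt_gamma //.
  + exact: every_third_edge_sub.
  + exact: every_third_edge_norun.
  + exact: card_every_third_edge.
Qed.

Lemma bOCD_short_path : 0 < m < 3 -> bOCD E = m.
Proof.
move=> /andP [m_gt0 m_lt3]; have sDP F : E :\: F \subset E := subsetDl E F.
have norun (F : {set {set 'I_n}}) : ~ has_run3 F by move/has_run3_ge4; lia.
have E_gt0 : E != set0 by apply/set0Pn; exists (path_edge 0); apply: path_edge_in.
have gammaE : gamma_oc E = m.
  apply/eqP; rewrite eqn_leq gamma_oc_le_edge //.
  exact: gamma_oc_subpath_ge_norun (subxx E) (norun E).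
apply: bOCD_eq => [F sFE||].
- rewrite gammaE => lt_m; have [EF0|[e eEF]] := set_0Vmem (E :\: F).
    suff -> : F = E by rewrite card_path_edges.
    by apply/eqP; rewrite eqEsubset sFE -setD_eq0 EF0 eqxx.
  have EF_gt0 : E :\: F != set0 by apply/set0Pn; exists e.
  by have := gamma_oc_le_edge (sDP F) EF_gt0; lia.
- by rewrite card_path_edges.
- by exists E; rewrite setDv gamma_oc0 card_ord gammaE card_path_edges; split.
Qed.

End PathOnSuccVertices.

Theorem mainTheorem10 (n : nat) (hn : 2 <= n) :
  bOCD (path_edges n) =
    if n == 2 then 1
    else if n == 3 then 2
    else (n + 2) %/ 3 - 1.
Proof.
case: n hn => [//|m] hm.
have [m_lt3|m_ge3] := ltnP m 3.
  by rewrite bOCD_short_path ?hm //; case: m hm m_lt3 => [|[|[|]]].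
rewrite bOCD_long_path //; case: eqP => [|_]; first lia.
by case: eqP => [|_]; lia.
Qed.
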